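(* Let $S=\langle P,\varphi\rangle$ be a SUT model, $t$ a strength, $N\ge1$ an integer and $lb$ an integer with $0\le lb<CAN(t,S)$ and $lb+1\le N$. Let $m=N-(lb+1)$ be the number of variables $u_i$, and consider the Weighted Partial MaxSAT instance $\Psi$ defined in the context. If $N\ge CAN(t,S)$, the optimal cost of $\Psi$ is $CAN(t,S)-(lb+1)+(|\mathcal T_a|-T(N;t,S))\cdot(m+1)$; otherwise it is $N-(lb+1)+(|\mathcal T_a|-T(N;t,S))\cdot(m+1)$.
   Context: A SUT model is $S=\langle P,\varphi\rangle$, where $P$ is a finite set of parameters, each $p\in P$ having a finite nonempty domain $d(p)$, and $\varphi$ is a propositional formula whose atoms have the form $(p=v)$ with $p\in P$, $v\in d(p)$. A test case is a full assignment $A$ giving each $p$ a value in $d(p)$ such that $\varphi$ is true when each atom $(p=v)$ is read as true iff $A(p)=v$; it is assumed that at least one test case exists. Fix a strength $t$ with $1\le t\le|P|$. A $t$-tuple is an assignment of values to exactly $t$ distinct parameters, viewed as a set of pairs $(p,v)$; a test case covers $\tau$ if it assigns $v$ to $p$ for every $(p,v)\in\tau$. A $t$-tuple is allowed if some test case covers it; $\mathcal T_a$ is the set of allowed $t$-tuples. A covering array $CA(N;t,S)$ is a list of $N$ test cases (repetitions allowed) covering every allowed $t$-tuple; $CAN(t,S)$ is the minimum such $N$. $T(N;t,S)$ is the maximum number of $t$-tuples covered by a list of $N$ test cases. $[N]=\{1,\dots,N\}$. A Weighted Partial MaxSAT instance consists of hard constraints and soft clauses $(c,w)$ with positive integer weights;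 its optimal cost is the minimum, over truth assignments satisfying all hard constraints, of the total weight of falsified soft clauses ($\infty$ if the hard constraints are unsatisfiable). Variables: $x_{i,p,v}$ ($i\in[N]$, $p\in P$, $v\in d(p)$), $c^i_\tau$ ($i\in\{0,\dots,N\}$, $\tau\in\mathcal T_a$), $u_i$ ($i\in\{lb+2,\dots,N\}$). Hard constraints of $\Psi$: (X) for every $i\in[N]$, $p\in P$: exactly one of $\{x_{i,p,v}:v\in d(p)\}$ is true; (SUTX) for every $i\in[N]$: the formula obtained from $\varphi$ by replacing each atom $(p=v)$ with $x_{i,p,v}$; (a) for every $i\in[N]$, $\tau\in\mathcal T_a$, $(p,v)\in\tau$: $c^i_\tau\rightarrow(c^{i-1}_\tau\vee x_{i,p,v})$; (c) for every $\tau\in\mathcal T_a$: $c^N_\tau\rightarrow\neg c^0_\tau$; (BSU) for every $i\in\{lb+2,\dots,N-1\}$: $u_{i+1}\rightarrow u_i$; (CCU) for every $i\in\{lb+2,\dots,N\}$, $\tau\in\mathcal T_a$: $\neg c^{i-1}_\tau\rightarrow u_i$. Soft clauses: $(\neg u_i,1)$ for every $i\in\{lb+2,\dots,N\}$, and $(c^N_\tau,m+1)$ for every $\tau\in\mathcal T_a$. *)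

From mathcomp Require Import all_boot.
Set Implicit Arguments.
Unset Strict Implicit.
Unset Printing Implicit Defensive.

Inductive form (A : Type) : Type :=
| FTrue
| FFalse
| FAtom of A
| FNot of form A
| FAnd of form A & form A
| FOr of form A & form A
| FImp of form A & form A
| FIff of form A & form A.
Arguments FTrue {A}.
Arguments FFalse {A}.

Fixpoint eval_form (A : Type) (val : A -> bool) (f : form A) : bool :=
  match f with
  | FTrue => true
  | FFalse => false
  | FAtom a => val a
  | FNot g => ~~ eval_form val g
  | FAnd g h => eval_form val g && eval_form val h
  | FOr g h => eval_form val g || eval_form val h
  | FImp g h => eval_form val g ==> eval_form val h
  | FIff g h => eval_form val g == eval_form val h
  end.

Fixpoint map_form (A B : Type) (r : A -> B) (f : form A) : form B :=
  match f with
  | FTrue => FTrue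
  | FFalse => FFalse
  | FAtom a => FAtom (r a)
  | FNot g => FNot (map_form r g)
  | FAnd g h => FAnd (map_form r g) (map_form r h)
  | FOr g h => FOr (map_form r g) (map_form r h)
  | FImp g h => FImp (map_form r g) (map_form r h)
  | FIff g h => FIff (map_form r g) (map_form r h)
  end.

Fixpoint atoms (A : Type) (f : form A) : seq A :=
  match f with
  | FTrue | FFalse => [::]
  | FAtom a => [:: a]
  | FNot g => atoms g
  | FAnd g h | FOr g h | FImp g h | FIff g h => atoms g ++ atoms h
  end.

Definition big_or (A : Type) (s : seq (form A)) : form A := foldr (@FOr A) FFalse s.
Definition big_and (A : Type) (s : seq (form A)) : form A := foldr (@FAnd A) FTrue s.

Fixpoint at_most_one (A : Type) (s : seq A) : form A :=
  match s with
  | [::] => FTrue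
  | a :: s' => FAnd (big_and [seq FNot (FAnd (FAtom a) (FAtom b)) | b <- s'])
                    (at_most_one s')
  end.

Definition exactly_one (A : Type) (s : seq A) : form A :=
  FAnd (big_or [seq FAtom a | a <- s]) (at_most_one s).

(* A literal is (x, b): it is the variable x if b, and its negation
   if ~~ b.  A clause is a list of literals (their disjunction).      *)
Record wpms (X : Type) := WPMS {
  wpms_hard : seq (form X);
  wpms_soft : seq (seq (X * bool) * nat) }.

Definition lit_true (X : Type) (a : X -> bool) (l : X * bool) : bool :=
  a l.1 == l.2.

Definition clause_true (X : Type) (a : X -> bool) (c : seq (X * bool)) : bool :=
  has (lit_true a) c.

Definition hard_sat (X : Type) (I : wpms X) (a : X -> bool) : bool :=
  all (eval_form a) (wpms_hard I).

Definition soft_cost (X : Type) (I : wpms X) (a : X -> bool) : nat :=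
  \sum_(cw <- wpms_soft I | ~~ clause_true a cw.1) cw.2.

Definition wpms_opt_cost (X : Type) (I : wpms X) (k : nat) : Prop :=
  (exists a : X -> bool, hard_sat I a /\ soft_cost I a = k) /\
  (forall a : X -> bool, hard_sat I a -> k <= soft_cost I a).

(* Parameters range over the finite type P; the values of
   all parameters are taken from a common finite universe V and the
   domain of p is the (nonempty) set d p.  phi is a formula whose atoms
   are pairs (p, v), read as (p = v).                                                  *)

Section SUT.
Variables (P V : finType) (d : P -> {set V}) (phi : form (P * V)).

Definition sut_model : Prop :=
  (forall p, d p != set0) /\ (forall pv, pv \in atoms phi -> pv.2 \in d pv.1).

Definition test_case (A : {ffun P -> V}) : bool :=
  [forall p, A p \in d p] && eval_form (fun pv : P * V => A pv.1 == pv.2) phi.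

Variable t : nat.

Definition t_tuple (tau : {set P * V}) : bool :=
  [&& #|tau| == t,
      [forall pv in tau, pv.2 \in d pv.1] &
      [forall pv in tau, forall qw in tau, (pv.1 == qw.1) ==> (pv == qw)]].

Definition covers (A : {ffun P -> V}) (tau : {set P * V}) : bool :=
  [forall pv in tau, A pv.1 == pv.2].

Definition allowed (tau : {set P * V}) : bool :=
  t_tuple tau && [exists A, test_case A && covers A tau].

Definition Ta : {set {set P * V}} := [set tau | allowed tau].

Definition has_CA (N : nat) : bool :=
  [exists L : N.-tuple {ffun P -> V},
     all test_case L && [forall tau in Ta, has (covers^~ tau) L]].

Lemma has_CA_ex : exists N, has_CA N.
Proof.
set s := [seq A <- enum {ffun P -> V} | test_case A].
exists (size s); apply/existsP; exists (in_tuple s).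
apply/andP; split; first by apply/allP => A; rewrite mem_filter => /andP[].
apply/forall_inP => tau; rewrite inE => /andP[_ /existsP[A /andP[tA cA]]].
by apply/hasP; exists A => //; rewrite mem_filter tA mem_enum.
Qed.

Definition CAN : nat := ex_minn has_CA_ex.

Definition n_covered (L : seq {ffun P -> V}) : nat :=
  #|[set tau | t_tuple tau && has (covers^~ tau) L]|.

Definition Tmax (N : nat) : nat :=
  \max_(L : N.-tuple {ffun P -> V} | all test_case L) n_covered L.

Inductive psi_var :=
| xvar of nat & P & V
| cvar of nat & {set P * V}
| uvar of nat.

Variables (N lb : nat).

Definition m_u : nat := N - (lb + 1).

Definition idxN : seq nat := iota 1 N.
Definition idx_BSU : seq nat := iota (lb + 2) (N - (lb + 2)).
Definition idx_U : seq nat := iota (lb + 2) (N - (lb + 1)).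

Definition V_ (x : psi_var) : form psi_var := FAtom x.

Definition hard_X : seq (form psi_var) :=
  [seq exactly_one [seq xvar i p v | v <- enum (d p)] | i <- idxN, p <- enum P].

Definition hard_SUTX : seq (form psi_var) :=
  [seq map_form (fun pv : P * V => xvar i pv.1 pv.2) phi | i <- idxN].

Definition hard_a : seq (form psi_var) :=
  flatten [seq [seq FImp (V_ (cvar i tau))
                          (FOr (V_ (cvar i.-1 tau)) (V_ (xvar i pv.1 pv.2)))
               | pv <- enum tau]
          | i <- idxN, tau <- enum Ta].

Definition hard_c : seq (form psi_var) :=
  [seq FImp (V_ (cvar N tau)) (FNot (V_ (cvar 0 tau))) | tau <- enum Ta].

Definition hard_BSU : seq (form psi_var) :=
  [seq FImp (V_ (uvar i.+1)) (V_ (uvar i)) | i <- idx_BSU].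

Definition hard_CCU : seq (form psi_var) :=
  [seq FImp (FNot (V_ (cvar i.-1 tau))) (V_ (uvar i)) | i <- idx_U, tau <- enum Ta].

Definition soft_Psi : seq (seq (psi_var * bool) * nat) :=
  [seq ([:: (uvar i, false)], 1) | i <- idx_U] ++
  [seq ([:: (cvar N tau, true)], m_u + 1) | tau <- enum Ta].

Definition Psi : wpms psi_var :=
  WPMS (hard_X ++ hard_SUTX ++ hard_a ++ hard_c ++ hard_BSU ++ hard_CCU) soft_Psi.

End SUT.

From mathcomp Require Import all_boot zify.
Set Implicit Arguments.
Unset Strict Implicit.
Unset Printing Implicit Defensive.

(* A model of the hard constraints reads as N test cases (the x's), with c^N_tau
   true only for tuples they cover, hence for at most T(N) tuples: covering fewer
   costs at least m + 1 more than covering T(N), which outweighs all u-clauses.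
   When T(N) tuples are covered, u_i must hold for every i <= min(CAN, N), since
   otherwise rows 1..i-1 would already cover them, against T(i-1) < T(i) for
   i <= CAN.  Conversely an optimal list of N test cases, reordered so that a
   covering array comes first when CAN <= N, gives a model of exactly this cost
   with u_i true iff i <= min(CAN, N). *)

Lemma all_flatten (T : Type) (p : pred T) (ss : seq (seq T)) :
  all p (flatten ss) = all (all p) ss.
Proof. by elim: ss => //= s ss IH; rewrite all_cat IH. Qed.

Lemma sub_in_count (T : eqType) (p q : pred T) (s : seq T) :
  {in s, subpred p q} -> count p s <= count q s.
Proof.
move=> pq; rewrite (@eq_in_count _ p (predI p q)) ?sub_count // => [x /andP[] //|x xs].
by apply/idP/andP => [px|[]//]; split=> //; exact: pq.
Qed.

Lemma count_enum_card (T : finType) (A : {set T}) (q : pred T) :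
  count q (enum A) = #|[set x in A | q x]|.
Proof.
rewrite -sum1_count big_enum_cond /= sum1_card.
by apply: eq_card => x; rewrite !inE.
Qed.

Lemma count_iota_leq a n k : a <= k.+1 <= a + n ->
  count (fun i => i <= k) (iota a n) = k.+1 - a.
Proof.
move=> /andP[ak kn]; rewrite -size_filter.
rewrite (@eq_filter _ _ (fun i => i < a + (k.+1 - a))) ?filter_iota_ltn ?size_iota //; first lia.
by move=> i; rewrite subnKC.
Qed.

Lemma eval_map_form (A B : Type) (r : A -> B) (val : B -> bool) (f : form A) :
  eval_form val (map_form r f) = eval_form (val \o r) f.
Proof. by elim: f => //= [g -> | g -> h -> | g -> h -> | g -> h -> | g -> h ->]. Qed.

Lemma eq_in_eval_form (A : eqType) (v1 v2 : A -> bool) (f : form A) :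
  {in atoms f, v1 =1 v2} -> eval_form v1 f = eval_form v2 f.
Proof.
elim: f => //= [a v12 | g IHg /IHg -> //|||| ]; first by rewrite v12 ?mem_head.
all: by move=> g IHg h IHh v12; rewrite IHg ?IHh // => x x_in; rewrite v12 // mem_cat x_in ?orbT.
Qed.

Lemma eval_big_and (A : Type) (val : A -> bool) (s : seq (form A)) :
  eval_form val (big_and s) = all (eval_form val) s.
Proof. by elim: s => //= f s ->. Qed.

Lemma eval_big_or (A : Type) (val : A -> bool) (s : seq (form A)) :
  eval_form val (big_or s) = has (eval_form val) s.
Proof. by elim: s => //= f s ->. Qed.

Section ExactlyOne.
Variables (A : Type) (W : eqType) (f : W -> A) (val : A -> bool).

Lemma eval_at_most_oneP (w : seq W) : uniq w ->
  reflect {in w &, forall x y, val (f x) -> val (f y) -> x = y}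
          (eval_form val (at_most_one (map f w))).
Proof.
elim: w => [_|z w IH /= /andP[zNw /IH{}IH]]; first by left.
rewrite eval_big_and -map_comp all_map.
apply: (iffP andP) => [[/allP z_excl /IH amo] x y | amo].
  rewrite !inE => /predU1P[-> | xw] /predU1P[-> | yw] // vx vy.
  - by have := z_excl y yw; rewrite /= vx vy.
  - by have := z_excl x xw; rewrite /= vx vy.
  - exact: amo.
split.
  apply/allP => y yw /=; apply/negP => /andP[vz vy].
  by move: zNw; rewrite (amo z y) ?inE ?eqxx ?yw ?orbT.
by apply/IH => x y xw yw; apply: amo; rewrite inE ?xw ?yw orbT.
Qed.

Lemma eval_exactly_oneP (w : seq W) : uniq w ->
  reflect (exists2 x, x \in w & {in w, forall y, val (f y) = (y == x)})
          (eval_form val (exactly_one (map f w))).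
Proof.
rewrite /exactly_one /= eval_big_or -map_comp has_map => uw.
apply: (iffP andP) => [[/hasP[x xw vx] /(eval_at_most_oneP uw) amo] | [x xw vfx]].
  by exists x => // y yw; apply/idP/eqP => [vy | ->] //; exact: amo.
split; first by apply/hasP; exists x; rewrite //= vfx ?eqxx.
by apply/(eval_at_most_oneP uw) => y z yw zw; rewrite !vfx // => /eqP-> /eqP->.
Qed.

End ExactlyOne.

Section CoveringArrays.
Variables (P V : finType) (d : P -> {set V}) (phi : form (P * V)) (t : nat).

Local Notation test_case := (test_case d phi).
Local Notation n_covered := (n_covered d t).
Local Notation Tmax := (Tmax d phi t).
Local Notation Ta := (Ta d phi t).
Local Notation CAN := (CAN d phi t).
Local Notation cov tau := ((@covers P V)^~ tau).

Lemma n_covered_count (L : seq {ffun P -> V}) : all test_case L ->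
  n_covered L = count (fun tau => has (cov tau) L) (enum Ta).
Proof.
move=> tcL; rewrite count_enum_card; apply: eq_card => tau; rewrite !inE.
apply/andP/andP => [[t_tau covL] | [/andP[t_tau _] covL]]; split=> //.
have /hasP[A AL Acov] := covL.
by rewrite /allowed t_tau; apply/existsP; exists A; rewrite Acov (allP tcL).
Qed.

Lemma n_covered_le_card_Ta L : all test_case L -> n_covered L <= #|Ta|.
Proof. by move=> tcL; rewrite n_covered_count // cardE count_size. Qed.

Lemma n_covered_card_Ta L : all test_case L -> {in Ta, forall tau, has (cov tau) L} ->
  n_covered L = #|Ta|.
Proof.
move=> tcL covL; rewrite n_covered_count // cardE -count_predT.
by apply: eq_in_count => tau; rewrite mem_enum => /covL ->.
Qed.

Lemma n_covered_le_Tmax L : all test_case L -> n_covered L <= Tmax (size L).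
Proof. by move=> tcL; exact: (leq_bigmax_cond (in_tuple L)). Qed.

Lemma CAN_le_size L : all test_case L -> {in Ta, forall tau, has (cov tau) L} ->
  CAN <= size L.
Proof.
move=> tcL covL; rewrite /CAN; case: ex_minnP => n _; apply.
by apply/existsP; exists (in_tuple L); rewrite tcL; apply/forall_inP.
Qed.

Lemma CAN_witness : exists L : seq {ffun P -> V},
  [/\ size L = CAN, all test_case L & {in Ta, forall tau, has (cov tau) L}].
Proof.
rewrite /CAN; case: ex_minnP => n /existsP[L /andP[tcL /forall_inP covL]] _.
by exists L; rewrite size_tuple.
Qed.

Variable A0 : {ffun P -> V}.
Hypothesis tcA0 : test_case A0.

Lemma all_test_case_nseq n : all test_case (nseq n A0).
Proof. by apply/allP => A /nseqP[-> _]. Qed.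

Lemma Tmax_witness n : exists L : seq {ffun P -> V},
  [/\ size L = n, all test_case L & n_covered L = Tmax n].
Proof.
have : 0 < #|[pred L : n.-tuple {ffun P -> V} | all test_case L]|.
  by apply/card_gt0P; exists (nseq_tuple n A0); rewrite inE /= all_test_case_nseq.
case/(eq_bigmax_cond (fun L : n.-tuple _ => n_covered L)) => L tcL maxL.
by exists L; rewrite size_tuple -maxL.
Qed.

Lemma Tmax_le_card_Ta n : Tmax n <= #|Ta|.
Proof. by have [L [_ tcL <-]] := Tmax_witness n; exact: n_covered_le_card_Ta. Qed.

Lemma leq_Tmax k n : k <= n -> Tmax k <= Tmax n.
Proof.
move=> kn; have [L [sizeL tcL <-]] := Tmax_witness k.
have tcLA0 : all test_case (L ++ nseq (n - k) A0) by rewrite all_cat tcL all_test_case_nseq.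
have := n_covered_le_Tmax tcLA0; rewrite size_cat size_nseq sizeL subnKC //.
apply: leq_trans; apply: subset_leq_card; apply/subsetP => tau.
by rewrite !inE has_cat => /andP[-> ->].
Qed.

(* Below CAN an optimal list misses an allowed tuple, and one more test case covers it. *)
Lemma Tmax_ltS k : k < CAN -> Tmax k < Tmax k.+1.
Proof.
move=> kCAN; have [L [sizeL tcL <-]] := Tmax_witness k.
have : ~~ [forall tau in Ta, has (cov tau) L].
  by apply: contraL kCAN => /forall_inP/(CAN_le_size tcL); rewrite sizeL -leqNgt.
case/forall_inPn => tau Ta_tau tau_uncov.
have /andP[t_tau /existsP[B /andP[tcB Bcov]]] : allowed d phi t tau by rewrite inE in Ta_tau.
have tcBL : all test_case (B :: L) by rewrite /= tcB.
have := n_covered_le_Tmax tcBL; rewrite /= sizeL; apply: leq_trans.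
apply: proper_card; apply/properP; split.
  by apply/subsetP => tau'; rewrite !inE /= => /andP[-> ->]; rewrite orbT.
by exists tau; rewrite !inE t_tau /= ?Bcov // (negbTE tau_uncov).
Qed.

Lemma optimal_list_with_short_prefix n : exists L : seq {ffun P -> V},
  [/\ size L = n, all test_case L, n_covered L = Tmax n &
      {in Ta, forall tau, has (cov tau) L -> has (cov tau) (take (minn CAN n) L)}].
Proof.
case: (leqP CAN n) => [CANn | nCAN]; last first.
  have [L [sizeL tcL maxL]] := Tmax_witness n.
  by exists L; split=> // tau _; rewrite -sizeL take_size.
have [L [sizeL tcL covL]] := CAN_witness.
have tcLA0 : all test_case (L ++ nseq (n - CAN) A0) by rewrite all_cat tcL all_test_case_nseq.
have covLA0 : {in Ta, forall tau, has (cov tau) (L ++ nseq (n - CAN) A0)}.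
  by move=> tau /covL covtau; rewrite has_cat covtau.
have sizeLA0 : size (L ++ nseq (n - CAN) A0) = n by rewrite size_cat size_nseq sizeL subnKC.
exists (L ++ nseq (n - CAN) A0); rewrite take_size_cat //; split=> // [|tau /covL //].
apply/eqP; rewrite n_covered_card_Ta // eqn_leq Tmax_le_card_Ta andbT.
by have := n_covered_le_Tmax tcLA0; rewrite sizeLA0 n_covered_card_Ta.
Qed.

End CoveringArrays.

Section Encoding.
Variables (P V : finType) (d : P -> {set V}) (phi : form (P * V)) (t N lb : nat).

Local Notation test_case := (test_case d phi).
Local Notation n_covered := (n_covered d t).
Local Notation Ta := (Ta d phi t).
Local Notation Psi := (Psi d phi t N lb).
Local Notation cov tau := ((@covers P V)^~ tau).

Lemma soft_cost_Psi (a : psi_var P V -> bool) :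
  soft_cost Psi a = count (fun i => a (@uvar P V i)) (idx_U N lb)
     + (#|Ta| - count (fun tau => a (@cvar P V N tau)) (enum Ta)) * (m_u N lb + 1).
Proof.
rewrite /soft_cost /= /soft_Psi big_cat !big_map /= -sum1_count.
congr (_ + _); first by apply: eq_bigl => i; rewrite /clause_true /lit_true /= orbF; case: (a _).
rewrite (eq_bigl (fun tau => ~~ a (@cvar P V N tau))); last first.
  by move=> tau; rewrite /clause_true /lit_true /= orbF; case: (a _).
rewrite big_const_seq iter_addn_0 mulnC; congr (_ * _).
by rewrite cardE -(count_predC (fun tau => a (@cvar P V N tau))) addKn.
Qed.

Section Witness.
Variables (A0 : {ffun P -> V}) (L : seq {ffun P -> V}) (k : nat).

(* Row i of L sets the x's; c^i_tau says that the first i rows cover tau, except for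
   tuples L never covers, whose c^i hold below N so that they force no u_i. *)
Definition witness (x : psi_var P V) : bool :=
  match x with
  | xvar i p v => nth A0 L i.-1 p == v
  | cvar i tau => if has (cov tau) L then has (cov tau) (take i L) else i < N
  | uvar i => i <= k
  end.

Hypothesis sizeL : size L = N.
Hypothesis tcL : all test_case L.
Hypothesis prefixL : {in Ta, forall tau, has (cov tau) L -> has (cov tau) (take k L)}.

Lemma test_case_witness_row i : i \in idxN N -> test_case (nth A0 L i.-1).
Proof. by rewrite mem_iota => /andP[i1 iN]; apply: (allP tcL); rewrite mem_nth // sizeL; lia. Qed.

Lemma witness_cN tau : witness (@cvar P V N tau) = has (cov tau) L.
Proof. by rewrite /= -sizeL take_size ltnn; case: ifP. Qed.

Lemma witness_hard_sat : hard_sat Psi witness.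
Proof.
rewrite /hard_sat /= !all_cat; apply/and5P; split.
- apply/all_allpairsP => i p /test_case_witness_row /andP[/forallP dom _] _.
  apply/(eval_exactly_oneP _ _ (enum_uniq _)); exists (nth A0 L i.-1 p).
    by rewrite mem_enum dom.
  by move=> v _; rewrite /= eq_sym.
- by rewrite all_map; apply/allP => i /test_case_witness_row /andP[_ sat] /=; rewrite eval_map_form.
- rewrite all_flatten; apply/all_allpairsP => i tau; rewrite mem_iota => /andP[i1 iN] _.
  rewrite all_map; apply/allP => pv pv_tau /=.
  case: ifP => [covL | _]; last by apply/implyP => _; apply/orP; left; lia.
  case: i i1 iN => // j _ jN /=; rewrite (take_nth A0) ?sizeL // has_rcons.
  apply/implyP => /orP[/forall_inP/(_ pv) | -> //]; rewrite -mem_enum => /(_ pv_tau) ->.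
  by rewrite orbT.
- by rewrite all_map; apply/allP => tau _ /=; case: ifP; rewrite ?take0 ?ltnn /= ?implybT.
apply/andP; split.
  by rewrite all_map; apply/allP => i _ /=; apply/implyP; exact: ltnW.
apply/all_allpairsP => i tau; rewrite mem_iota mem_enum => /andP[i1 iN] Ta_tau /=.
apply/implyP; case: (leqP i k) => // ki; apply: contraNT => _.
case: ifP => [/(prefixL Ta_tau) | _]; last lia.
by rewrite -(subnKC (_ : k <= i.-1)) ?takeD ?has_cat => [->|]; last lia.
Qed.

Lemma witness_soft_cost : lb + 1 <= k <= N ->
  soft_cost Psi witness = k - (lb + 1) + (#|Ta| - n_covered L) * (m_u N lb + 1).
Proof.
move=> kN; rewrite soft_cost_Psi (n_covered_count _ tcL) (eq_count witness_cN).
by congr (_ + _); rewrite [LHS]count_iota_leq; lia.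
Qed.

End Witness.
End Encoding.

Section LowerBound.
Variables (P V : finType) (d : P -> {set V}) (phi : form (P * V)) (t N lb : nat).
Variables (A0 : {ffun P -> V}) (a : psi_var P V -> bool).

Local Notation test_case := (test_case d phi).
Local Notation Tmax := (Tmax d phi t).
Local Notation Ta := (Ta d phi t).
Local Notation CAN := (CAN d phi t).
Local Notation Psi := (Psi d phi t N lb).
Local Notation cov tau := ((@covers P V)^~ tau).
Local Notation count_cN := (count (fun tau => a (@cvar P V N tau)) (enum Ta)).

(* [A0] only supplies values where no x_{i,p,v} with v in d p is true, which the
   constraints (X) exclude for 1 <= i <= N. *)
Definition row i : {ffun P -> V} :=
  [ffun p => odflt (A0 p) [pick v in d p | a (@xvar P V i p v)]].

Definition rows k := map row (iota 1 k).

Hypothesis hX : all (eval_form a) (hard_X d N).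

Lemma row_xvar i p : 1 <= i <= N ->
  row i p \in d p /\ {in d p, forall v, a (@xvar P V i p v) = (row i p == v)}.
Proof.
move=> iN; have i_idx : i \in idxN N by rewrite mem_iota; lia.
have p_enum : p \in enum P by rewrite mem_enum.
have /(eval_exactly_oneP _ _ (enum_uniq _)) [v] := all_allpairsP hX i p i_idx p_enum.
rewrite mem_enum => v_dp ax.
suff ->: row i p = v by split=> // w; rewrite -mem_enum eq_sym => /ax.
rewrite ffunE; case: pickP => [w /andP[w_dp aw] | none] /=.
  by apply/eqP; rewrite -ax ?mem_enum.
by have := none v; rewrite v_dp ax ?mem_enum ?eqxx.
Qed.

Hypothesis hS : all (eval_form a) (hard_SUTX phi N).
Hypothesis sut : sut_model d phi.

Lemma test_case_row i : 1 <= i <= N -> test_case (row i).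
Proof.
move=> iN; apply/andP; split; first by apply/forallP => p; case: (row_xvar p iN).
have i_idx : i \in idxN N by rewrite mem_iota; lia.
move: hS; rewrite all_map => /allP/(_ i i_idx) /=; rewrite eval_map_form.
rewrite (eq_in_eval_form (v2 := fun pv => row i pv.1 == pv.2)) // => pv /(proj2 sut) pv_d /=.
by case: (row_xvar pv.1 iN) => _ ->.
Qed.

Lemma test_case_rows k : k <= N -> all test_case (rows k).
Proof.
by move=> kN; rewrite all_map; apply/allP => i; rewrite mem_iota => iN; apply: test_case_row; lia.
Qed.

Hypothesis hA : all (eval_form a) (hard_a d phi t N).

Lemma rows_cover tau k : tau \in Ta -> ~~ a (@cvar P V 0 tau) ->
  k <= N -> a (@cvar P V k tau) -> has (cov tau) (rows k).
Proof.
move=> Ta_tau nc0; elim: k => [|k IH] kN ck; first by rewrite ck in nc0.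
rewrite /rows -[k.+1]addn1 iotaD map_cat has_cat /= add1n.
case ck': (a (@cvar P V k tau)); first by rewrite IH //; lia.
have k_idx : k.+1 \in idxN N by rewrite mem_iota; lia.
have tau_enum : tau \in enum Ta by rewrite mem_enum.
move: hA; rewrite all_flatten => /all_allpairsP/(_ _ _ k_idx tau_enum).
rewrite all_map => /allP clauses; rewrite orbF; apply/orP; right; apply/forall_inP => pv pv_tau.
have /and3P[_ /forall_inP dom _] : t_tuple d t tau by move: Ta_tau; rewrite inE => /andP[].
have := clauses pv; rewrite mem_enum /= ck ck' => /(_ pv_tau).
by case: (row_xvar (i := k.+1) pv.1 kN) => _ ->; last exact: dom.
Qed.

Hypothesis hC : all (eval_form a) (hard_c d phi t N).

Lemma cN_neg_c0 tau : tau \in Ta -> a (@cvar P V N tau) -> ~~ a (@cvar P V 0 tau).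
Proof.
move=> Ta_tau; have tau_enum : tau \in enum Ta by rewrite mem_enum.
by move: hC; rewrite all_map => /allP/(_ tau tau_enum) /= /implyP.
Qed.

Hypothesis tcA0 : test_case A0.

Lemma count_cN_le_Tmax k : k <= N ->
  {in Ta, forall tau, a (@cvar P V N tau) -> a (@cvar P V k tau)} -> count_cN <= Tmax k.
Proof.
move=> kN cNk; have := n_covered_le_Tmax t (test_case_rows kN).
rewrite size_map size_iota; apply: leq_trans; rewrite (n_covered_count t (test_case_rows kN)).
apply: sub_in_count => tau; rewrite mem_enum => Ta_tau cN.
exact: rows_cover (cN_neg_c0 Ta_tau cN) kN (cNk _ Ta_tau cN).
Qed.

Hypothesis hU : all (eval_form a) (hard_CCU d phi t N lb).

Lemma uvar_forced i : count_cN = Tmax N -> i \in idx_U N lb -> i <= minn CAN N ->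
  a (@uvar P V i).
Proof.
move=> cN_max i_idx iCAN; apply: contraT => nu.
have [j def_i] : exists j, i = j.+1.
  by exists i.-1; rewrite prednK //; move: i_idx; rewrite mem_iota; lia.
subst i; have : count_cN <= Tmax j.
  apply: count_cN_le_Tmax => [|tau Ta_tau _]; first lia.
  have tau_enum : tau \in enum Ta by rewrite mem_enum.
  by have := all_allpairsP hU j.+1 tau i_idx tau_enum; rewrite /= (negbTE nu) implybF negbK.
have := Tmax_ltS tcA0 (_ : j < CAN); have := leq_Tmax t tcA0 (_ : j.+1 <= N); lia.
Qed.

Lemma soft_cost_Psi_ge : lb < CAN -> lb + 1 <= N ->
  minn CAN N - (lb + 1) + (#|Ta| - Tmax N) * (m_u N lb + 1) <= soft_cost Psi a.
Proof.
move=> lbCAN lbN; rewrite soft_cost_Psi.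
have cN_le : count_cN <= Tmax N by apply: count_cN_le_Tmax.
have Tmax_le := Tmax_le_card_Ta t tcA0 N.
move: cN_le; rewrite leq_eqVlt => /orP[/eqP cN_max | cN_lt].
  rewrite cN_max leq_add2r.
  have <- : count (fun i => i <= minn CAN N) (idx_U N lb) = minn CAN N - (lb + 1).
    by rewrite count_iota_leq; lia.
  by apply: sub_in_count => i i_idx /= iCAN; apply: uvar_forced.
have : (#|Ta| - Tmax N).+1 * (m_u N lb + 1) <= (#|Ta| - count_cN) * (m_u N lb + 1).
  by rewrite leq_mul2r; apply/orP; right; lia.
rewrite mulSn /m_u; lia.
Qed.

End LowerBound.

Theorem proposition12 (P V : finType) (d : P -> {set V}) (phi : form (P * V))
    (t N lb : nat) :
  sut_model d phi ->
  (exists A : {ffun P -> V}, test_case d phi A) ->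
  1 <= t <= #|P| ->
  1 <= N ->
  lb < CAN d phi t ->
  lb + 1 <= N ->
  wpms_opt_cost (Psi d phi t N lb)
    (if CAN d phi t <= N then
       CAN d phi t - (lb + 1)
         + (#|Ta d phi t| - Tmax d phi t N) * (m_u N lb + 1)
     else
       N - (lb + 1) + (#|Ta d phi t| - Tmax d phi t N) * (m_u N lb + 1)).
Proof.
move=> sut [A0 tcA0] _ _ lbCAN lbN.
set cost_c := (#|Ta d phi t| - Tmax d phi t N) * (m_u N lb + 1).
have -> : (if CAN d phi t <= N then CAN d phi t - (lb + 1) + cost_c else N - (lb + 1) + cost_c)
        = minn (CAN d phi t) N - (lb + 1) + cost_c by case: leqP.
rewrite {}/cost_c; split.
  have [L [sizeL tcL maxL prefixL]] := optimal_list_with_short_prefix t tcA0 N.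
  exists (witness N A0 L (minn (CAN d phi t) N)); split; first exact: witness_hard_sat.
  by rewrite witness_soft_cost ?maxL //; lia.
move=> a; rewrite /hard_sat /= !all_cat => /and5P[hX hS hA hC /andP[_ hU]].
exact: (soft_cost_Psi_ge hX hS sut hA hC tcA0 hU lbCAN lbN).
Qed.
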